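(* Consider the noisy urn process $(A_t,B_t)_{t\in\mathbb{N}}$ described in the context with $\kappa=1$ almost surely (the leaky urn), started at $(A_1,B_1)=(1,0)$, and let $\tau:=\min\{t>1:|A_t|+|B_t|=1\}$ (the time to absorption of the leaky urn). Then $\mathbb{E}[\tau]=\infty$.
   Context: Noisy urn with a $\mathbb{Z}$-valued $\kappa$ (here $\kappa\equiv1$), $\kappa_t$ i.i.d. copies, $\mathrm{sgn}(x)=x/|x|$: a Markov chain on $\mathbb{Z}^2\setminus\{(0,0)\}$. If $A_tB_t\ne0$: from $(a,b)$ it moves to $(a,b+\mathrm{sgn}(a))$ with probability $|a|/(|a|+|b|)$ and to $(a-\mathrm{sgn}(b),b)$ with probability $|b|/(|a|+|b|)$. If $A_t\ne0,B_t=0$: $(A_{t+1},B_{t+1})=(\mathrm{sgn}(A_t)\max\{1,|A_t|-\kappa_t\},\mathrm{sgn}(A_t))$. If $A_t=0,B_t\ne0$: $(A_{t+1},B_{t+1})=(-\mathrm{sgn}(B_t),\mathrm{sgn}(B_t)\max\{1,|B_t|-\kappa_t\})$. *)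

From HB Require Import structures.
From mathcomp Require Import all_boot all_order all_algebra.
From mathcomp Require Import all_classical all_reals all_analysis.
Set Implicit Arguments. Unset Strict Implicit. Unset Printing Implicit Defensive.
Import Order.TTheory GRing.Theory Num.Theory.
Local Open Scope ring_scope.

Definition state := (int * int)%type.

Definition sgn (x : int) : int := Num.sg x.

Definition kappa : int := 1.

(* One-step transition probability of the noisy urn with kappa = 1.
   From (0,0) (not a state of the chain) we put probability 0. *)
Definition trans (R : realType) (s s' : state) : R :=
  let: (a, b) := s in
  if (a != 0) && (b != 0) then
    (if s' == (a, b + sgn a) then (`|a|%:~R / (`|a| + `|b|)%:~R) else 0) +
    (if s' == (a - sgn b, b) then (`|b|%:~R / (`|a| + `|b|)%:~R) else 0)
  else if (a != 0) && (b == 0) then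
    (if s' == (sgn a * Num.max 1 (`|a| - kappa), sgn a) then 1 else 0)
  else if (a == 0) && (b != 0) then
    (if s' == (- sgn b, sgn b * Num.max 1 (`|b| - kappa)) then 1 else 0)
  else 0.

(* Cylinder event: (X_1,...,X_n) = (s 1, ..., s n). Time starts at 1. *)
Definition cyl (T : Type) (X : nat -> T -> state) (n : nat) (s : nat -> state)
  : set T := [set w | forall i, (1 <= i <= n)%N -> X i w = s i].

(* X is the leaky urn chain on the probability space (T,P), started at (1,0):
   the events {X_t = s} are measurable, and the finite-dimensional
   distributions are those of the Markov chain with kernel [trans]. *)
Definition is_leaky_urn (d : measure_display) (T : measurableType d)
  (R : realType) (P : probability T R) (X : nat -> T -> state) : Prop :=
  [/\ (forall t (s : state), measurable (X t @^-1` [set s])),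
      (forall s, P (cyl X 1 s) = ((s 1%N == ((1 : int), (0 : int)))%:R)%:E) &
      (forall n s, (0 < n)%N ->
         P (cyl X n.+1 s) = (P (cyl X n s) * (trans R (s n) (s n.+1))%:E)%E)].

(* tau(w) = min { t > 1 : |A_t| + |B_t| = 1 }, = +oo if that set is empty. *)
Definition tau (R : realType) (T : Type) (X : nat -> T -> state) (w : T)
  : \bar R :=
  ereal_inf [set ((t%:R : R)%:E) | t in
     [set t : nat | (1 < t)%N /\ `|(X t w).1| + `|(X t w).2| = 1]].

From HB Require Import structures.
From mathcomp Require Import all_boot all_order all_algebra.
From mathcomp Require Import all_classical all_reals all_analysis.
From mathcomp Require Import zify.
From mathcomp.algebra_tactics Require Import ring lra.
Set Implicit Arguments. Unset Strict Implicit. Unset Printing Implicit Defensive.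
Import Order.TTheory GRing.Theory Num.Theory.
Local Open Scope ring_scope.

(* The potential H = [urnH] is harmonic for the urn and vanishes on the
   absorbing states |a| + |b| = 1, so for the chain killed at absorption its
   mean stays H(1,1) = 2.  Since H(a,b) >= |a||b| off the axes, H ln H has mean
   increment at most 4 per step.  Writing M_k = P(tau > k+1), this gives, for
   every K > 0,
     2 ln K - K M_n <= E[H ln H (X_(n+1)); tau > n+1]
                    <= 2 ln 2 + 4 (M_0 + ... + M_(n-1)),
   the left inequality being y ln y >= y ln K - K.  If the M_k had a bounded
   sum B, monotonicity would give M_n <= B/(n+1), and letting n and then K grow
   contradicts the display.  Hence E[tau] >= sum_k M_k = +oo. *)

Definition urnH (x : state) : int :=
  let: (a, b) := x in
  if (a != 0) && (b != 0) then a * a + b * b + sgn (a * b) * (`|a| - `|b|)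
  else a * a + b * b - `|a| - `|b|.

Definition alive (x : state) : bool := `|x.1| + `|x.2| != 1.

Variant state_spec : state -> Type :=
  | StateOrigin : state_spec (0, 0)
  | StateAxisA (a : int) of a != 0 : state_spec (a, 0)
  | StateAxisB (b : int) of b != 0 : state_spec (0, b)
  | StateInterior (a b : int) of a != 0 & b != 0 : state_spec (a, b).

Lemma stateP x : state_spec x.
Proof.
case: x => a b; have [->|a0] := eqVneq a 0; have [->|b0] := eqVneq b 0.
all: by constructor.
Qed.

Lemma urnH_interior (a b : int) : a != 0 -> b != 0 ->
  urnH (a, b) = a * a + b * b + sgn (a * b) * (`|a| - `|b|).
Proof. by rewrite /urnH => -> ->. Qed.

Lemma urnH_axis (a b : int) : (a == 0) || (b == 0) ->
  urnH (a, b) = a * a + b * b - `|a| - `|b|.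
Proof. by rewrite /urnH; case/orP => /eqP ->; rewrite ?eqxx ?andbF. Qed.

Lemma urnH_up (a b : int) : a != 0 -> b != 0 ->
  urnH (a, b + sgn a) = urnH (a, b) + 2 * sgn (a * b) * `|b|.
Proof.
move=> a0 b0; rewrite urnH_interior // /sgn.
have [e|ne] := eqVneq (b + Num.sg a) 0.
  by rewrite urnH_axis ?e ?eqxx ?orbT //; move: a0 b0 e; rewrite /sgn; nia.
by rewrite urnH_interior //; move: a0 b0 ne; rewrite /sgn; nia.
Qed.

Lemma urnH_left (a b : int) : a != 0 -> b != 0 ->
  urnH (a - sgn b, b) = urnH (a, b) - 2 * sgn (a * b) * `|a|.
Proof.
move=> a0 b0; rewrite urnH_interior // /sgn.
have [e|ne] := eqVneq (a - Num.sg b) 0.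
  by rewrite urnH_axis ?e ?eqxx ?orTb //; move: a0 b0 e; rewrite /sgn; nia.
by rewrite urnH_interior //; move: a0 b0 ne; rewrite /sgn; nia.
Qed.

Lemma urnH_leak_a (a : int) : a != 0 -> `|a| != 1 ->
  urnH (sgn a * Num.max 1 (`|a| - kappa), sgn a) = urnH (a, 0).
Proof.
move=> a0 a1; rewrite /kappa (@urnH_axis a 0) ?eqxx ?orbT //.
rewrite urnH_interior /sgn ?sgrM; try lia.
have [ha|ha] : a < 0 \/ 0 < a by lia.
all: nia.
Qed.

Lemma urnH_leak_b (b : int) : b != 0 -> `|b| != 1 ->
  urnH (- sgn b, sgn b * Num.max 1 (`|b| - kappa)) = urnH (0, b).
Proof.
move=> b0 b1; rewrite /kappa (@urnH_axis 0 b) ?eqxx ?orTb //.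
rewrite urnH_interior /sgn ?sgrM; try lia.
have [hb|hb] : b < 0 \/ 0 < b by lia.
all: nia.
Qed.

Lemma urnH_interior_ge (a b : int) : a != 0 -> b != 0 -> `|a| * `|b| <= urnH (a, b).
Proof.
move=> a0 b0; rewrite urnH_interior // /sgn sgrM.
have [ha|ha] : a < 0 \/ 0 < a by lia.
all: have [hb|hb] : b < 0 \/ 0 < b by lia.
all: nia.
Qed.

Lemma urnH_ge0 x : 0 <= urnH x.
Proof.
case: x / (stateP x) => [|a a0|b b0|a b a0 b0].
- by rewrite urnH_axis.
- by rewrite urnH_axis ?eqxx ?orbT //; nia.
- by rewrite urnH_axis ?eqxx //; nia.
by apply: le_trans (urnH_interior_ge a0 b0); rewrite mulr_ge0.
Qed.

Lemma urnH_absorbed x : ~~ alive x -> urnH x = 0.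
Proof.
case: x => a b /negPn /eqP e; simpl in e.
by rewrite urnH_axis; [nia | apply/orP; lia].
Qed.

Section xlnx.
Variable R : realType.
Implicit Types x y z : R.

Lemma ln_le_subr1 x : 0 < x -> ln x <= x - 1.
Proof.
by move=> x0; have := @le_ln1Dx R (x - 1); rewrite addrCA subrr addr0; apply; lra.
Qed.

Lemma xlnx_le_tangent y z : 0 <= y -> 0 < z ->
  y * ln y <= y * ln z + y * (y - z) / z.
Proof.
move=> y0 z0; have [->|yn0] := eqVneq y 0; first by rewrite !mul0r add0r.
have yp : 0 < y by rewrite lt_def yn0.
have : y * ln (y / z) <= y * (y / z - 1).
  by rewrite ler_pM2l // ln_le_subr1 // divr_gt0.
rewrite ln_div ?posrE // => h.
have e : y * (y - z) / z = y * (y / z - 1) by field; rewrite gt_eqF.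
lra.
Qed.

Lemma xlnx_ge_linear y z : 0 <= y -> 0 < z -> y * ln z - z <= y * ln y.
Proof.
move=> y0 z0; have [->|yn0] := eqVneq y 0; first by rewrite !mul0r sub0r oppr_le0 ltW.
have yp : 0 < y by rewrite lt_def yn0.
have : y * ln (z / y) <= y * (z / y - 1).
  by rewrite ler_pM2l // ln_le_subr1 // divr_gt0.
rewrite ln_div ?posrE // => h.
have e : y * (z / y - 1) = z - y by field; rewrite gt_eqF.
lra.
Qed.

Lemma xlnx_two_point_drift (A B H s y1 y2 : R) : 0 < A -> 0 < B -> 0 < H ->
  A * B <= H -> (s = 1 \/ s = -1) -> y1 = H + 2 * s * B -> y2 = H - 2 * s * A ->
  0 <= y1 -> 0 <= y2 ->
  A / (A + B) * (y1 * ln y1) + B / (A + B) * (y2 * ln y2) <= H * ln H + 4.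
Proof.
move=> A0 B0 H0 ABH hs e1 e2 y10 y20.
have w1 : 0 <= A / (A + B) by rewrite divr_ge0 // ltW // addr_gt0.
have w2 : 0 <= B / (A + B) by rewrite divr_ge0 // ltW // addr_gt0.
have i1 := ler_wpM2l w1 (xlnx_le_tangent y10 H0).
have i2 := ler_wpM2l w2 (xlnx_le_tangent y20 H0).
have e : A / (A + B) * (y1 * ln H + y1 * (y1 - H) / H) +
         B / (A + B) * (y2 * ln H + y2 * (y2 - H) / H) = H * ln H + 4 * (A * B / H).
  have ABn : A + B != 0 by rewrite gt_eqF // addr_gt0.
  have Hn : H != 0 by rewrite gt_eqF.
  by rewrite e1 e2; case: hs => ->; field; rewrite Hn ABn.
have : A * B / H <= 1 by rewrite ler_pdivrMr // mul1r.
lra.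
Qed.

End xlnx.

Definition next_states (x : state) : seq state :=
  let: (a, b) := x in
  if (a != 0) && (b != 0) then [:: (a, b + sgn a); (a - sgn b, b)]
  else if (a != 0) && (b == 0) then [:: (sgn a * Num.max 1 (`|a| - kappa), sgn a)]
  else if (a == 0) && (b != 0) then [:: (- sgn b, sgn b * Num.max 1 (`|b| - kappa))]
  else [::].

Lemma interior_moves_neq (a b : int) : a != 0 -> (a, b + sgn a) != (a - sgn b, b).
Proof. by move=> a0; rewrite xpair_eqE; move: a0; rewrite /sgn; lia. Qed.

Lemma next_states_uniq x : uniq (next_states x).
Proof.
case: x / (stateP x) => [|a a0|b b0|a b a0 b0]; rewrite /next_states ?eqxx ?a0 ?b0 //=.
by rewrite inE interior_moves_neq.
Qed.

Section killed_step.
Variable R : realType.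
Implicit Types (g : state -> R) (x : state).

Lemma trans_ge0 x y : 0 <= trans R x y.
Proof.
case: x => a b; rewrite /trans.
repeat case: ifP => _.
all: rewrite ?addr0 ?add0r ?ler01 ?lexx //.
all: try apply: addr_ge0.
all: apply: divr_ge0; rewrite ler0z; lia.
Qed.

Lemma sum_next_interior g (a b : int) : a != 0 -> b != 0 ->
  \sum_(y <- next_states (a, b)) trans R (a, b) y * g y =
  `|a|%:~R / (`|a| + `|b|)%:~R * g (a, b + sgn a) +
  `|b|%:~R / (`|a| + `|b|)%:~R * g (a - sgn b, b).
Proof.
move=> a0 b0; have /negbTE ne := interior_moves_neq b a0.
by rewrite /next_states /trans a0 b0 /= big_cons big_seq1 !eqxx ne eq_sym ne addr0 add0r.
Qed.

Lemma sum_next_axisA g (a : int) : a != 0 ->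
  \sum_(y <- next_states (a, 0)) trans R (a, 0) y * g y =
  g (sgn a * Num.max 1 (`|a| - kappa), sgn a).
Proof. by move=> a0; rewrite /next_states /trans a0 /= big_seq1 eqxx mul1r. Qed.

Lemma sum_next_axisB g (b : int) : b != 0 ->
  \sum_(y <- next_states (0, b)) trans R (0, b) y * g y =
  g (- sgn b, sgn b * Num.max 1 (`|b| - kappa)).
Proof. by move=> b0; rewrite /next_states /trans b0 /= big_seq1 eqxx mul1r. Qed.

Definition step_mean g x : R :=
  \sum_(y <- next_states x | alive y) trans R x y * g y.

Lemma step_mean_vanishing g x : (forall y, ~~ alive y -> g y = 0) ->
  step_mean g x = \sum_(y <- next_states x) trans R x y * g y.
Proof.
move=> g0; rewrite /step_mean big_mkcond; apply: eq_bigr => y _.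
by case: ifP => // /negbT /g0 ->; rewrite mulr0.
Qed.

Lemma step_mean1 x : step_mean (fun=> 1) x <= 1.
Proof.
rewrite /step_mean big_mkcond /=.
apply: (@le_trans _ _ (\sum_(y <- next_states x) trans R x y * 1)).
  by apply: ler_sum => y _; case: ifP => // _; rewrite mulr1 trans_ge0.
case: x / (stateP x) => [|a a0|b b0|a b a0 b0].
- by rewrite big_nil.
- by rewrite sum_next_axisA.
- by rewrite sum_next_axisB.
rewrite sum_next_interior // !mulr1 -mulrDl -intrD divff // gt_eqF // ltr0z; lia.
Qed.

Definition urnHr x : R := (urnH x)%:~R.
Definition urnF x : R := urnHr x * ln (urnHr x).

Lemma urnHr_ge0 x : 0 <= urnHr x.
Proof. by rewrite /urnHr ler0z urnH_ge0. Qed.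

Lemma urnHr_absorbed x : ~~ alive x -> urnHr x = 0.
Proof. by move=> /urnH_absorbed; rewrite /urnHr => ->. Qed.

Lemma urnF_absorbed x : ~~ alive x -> urnF x = 0.
Proof. by move=> /urnHr_absorbed; rewrite /urnF => ->; rewrite mul0r. Qed.

Lemma step_mean_urnH x : alive x -> step_mean urnHr x = urnHr x.
Proof.
rewrite step_mean_vanishing; last exact: urnHr_absorbed.
case: x / (stateP x) => [|a a0|b b0|a b a0 b0] al.
- by rewrite big_nil /urnHr.
- by rewrite sum_next_axisA // /urnHr urnH_leak_a //; move: al; rewrite /alive /=; lia.
- by rewrite sum_next_axisB // /urnHr urnH_leak_b //; move: al; rewrite /alive /=; lia.
rewrite sum_next_interior // /urnHr urnH_up // urnH_left // !(intrD, intrM, intrB).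
have Sn : (`|a|%:~R + `|b|%:~R : R) != 0 by rewrite gt_eqF // addr_gt0 // ltr0z; lia.
by field.
Qed.

Lemma step_mean_urnF x : alive x -> step_mean urnF x <= urnF x + 4.
Proof.
rewrite step_mean_vanishing; last exact: urnF_absorbed.
case: x / (stateP x) => [|a a0|b b0|a b a0 b0] al.
- by rewrite big_nil /urnF /urnHr mul0r add0r.
- rewrite sum_next_axisA // /urnF /urnHr urnH_leak_a; [lra|done|].
  by move: al; rewrite /alive /=; lia.
- rewrite sum_next_axisB // /urnF /urnHr urnH_leak_b; [lra|done|].
  by move: al; rewrite /alive /=; lia.
rewrite sum_next_interior // intrD /urnF.
apply: (xlnx_two_point_drift (s := (sgn (a * b))%:~R)).
- by rewrite ltr0z; lia.
- by rewrite ltr0z; lia.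
- by rewrite /urnHr ltr0z; have := urnH_interior_ge a0 b0; lia.
- by rewrite /urnHr -intrM ler_int urnH_interior_ge.
- have [->|->] : sgn (a * b) = 1 \/ sgn (a * b) = -1 by rewrite /sgn; lia.
  + by left.
  + by right.
- by rewrite /urnHr urnH_up // intrD !intrM.
- by rewrite /urnHr urnH_left // intrB !intrM.
- exact: urnHr_ge0.
- exact: urnHr_ge0.
Qed.

End killed_step.

Definition origin : state := (0, 0).
Definition start : state := (1, 0).

(* Paths are stored newest state first: [live_paths k] lists the sequences
   [X_(k+1); ...; X_2; X_1] with [X_1 = start] that follow [next_states] and
   are not absorbed at any of the times 2, ..., k+1. *)
Definition extend_paths (L : seq (seq state)) : seq (seq state) :=
  [seq y :: s | s <- L, y <- [seq z <- next_states (head origin s) | alive z]].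

Fixpoint live_paths (k : nat) : seq (seq state) :=
  if k is k'.+1 then extend_paths (live_paths k') else [:: [:: start]].

Lemma live_paths_shape k s : s \in live_paths k ->
  size s = k.+1 /\ (forall j, (j < k)%N -> alive (nth origin s j)).
Proof.
elim: k s => [|k IH] s /=; first by rewrite mem_seq1 => /eqP ->.
move=> /allpairsPdep [s' [y [s'V yin ->]]].
have [sz al] := IH _ s'V; split; first by rewrite /= sz.
move: yin; rewrite mem_filter => /andP [ya _].
by case=> [|j] //= jk; apply: al.
Qed.

Lemma live_paths_head k s : (0 < k)%N -> s \in live_paths k -> alive (head origin s).
Proof.
move=> k0 /live_paths_shape [sz al].
by case: s sz al => [|x s] //= _ al; apply: (al 0%N).
Qed.

Lemma live_paths_uniq k : uniq (live_paths k).
Proof.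
elim: k => [//|k IH] /=; apply: allpairs_uniq_dep => //.
  by move=> s _; apply/filter_uniq/next_states_uniq.
by move=> [s1 y1] [s2 y2] _ _ /= [-> ->].
Qed.

Lemma live_paths1 : live_paths 1 = [:: [:: (1, 1); start]].
Proof. by []. Qed.

Section path_means.
Variable R : realType.
Implicit Types g : state -> R.

Fixpoint path_weight (s : seq state) : R :=
  if s is y :: s' then
    if s' is x :: _ then trans R x y * path_weight s' else 1
  else 1.

Definition path_mean k g : R :=
  \sum_(s <- live_paths k) path_weight s * g (head origin s).

Definition survival k : R := path_mean k (fun=> 1).

Lemma path_weight_ge0 s : 0 <= path_weight s.
Proof.
elim: s => [|y [|x s] IH] //=.
by rewrite mulr_ge0 // trans_ge0.
Qed.

Lemma path_meanS k g : path_mean k.+1 g = path_mean k (step_mean g).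
Proof.
rewrite /path_mean /= /extend_paths big_allpairs_dep; apply: eq_big_seq => s sV.
have [sz _] := live_paths_shape sV.
case: s sz sV => [|x s] // _ _.
rewrite big_filter /step_mean mulr_sumr; apply: eq_bigr => y _ /=.
by ring.
Qed.

Lemma path_mean1 g : path_mean 1 g = g (1, 1).
Proof. by rewrite /path_mean live_paths1 big_seq1 /= !mul1r. Qed.

Lemma survival_ge0 k : 0 <= survival k.
Proof. by apply: sumr_ge0 => s _; rewrite mulr1 path_weight_ge0. Qed.

Lemma survival_noninc : {homo survival : i j / (i <= j)%N >-> j <= i}.
Proof.
apply: homo_leq => [x|y x z xy yz|k]; [exact: lexx | exact: le_trans yz xy |].
rewrite /survival path_meanS /path_mean.
apply: ler_sum => s _.
by rewrite mulr1 ler_piMr ?path_weight_ge0 ?step_mean1.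
Qed.

Lemma path_mean_urnH k : (0 < k)%N -> path_mean k (@urnHr R) = 2.
Proof.
elim: k => [//|[|k] IH] _.
  by rewrite path_mean1 /urnHr.
rewrite path_meanS -[RHS](IH erefl) /path_mean; apply: eq_big_seq => s sV.
by rewrite step_mean_urnH // (live_paths_head _ sV).
Qed.

Lemma path_mean_urnF_le n : (0 < n)%N ->
  path_mean n (@urnF R) <= urnF R (1, 1) + 4 * \sum_(k < n) survival k.
Proof.
elim: n => [//|[|n] IH] _.
  by rewrite path_mean1 big_ord1 lerDl mulr_ge0 // survival_ge0.
rewrite path_meanS big_ord_recr /= mulrDr addrA.
apply: le_trans (lerD (IH erefl) (lexx (4 * survival n.+1))).
rewrite /survival /path_mean mulr_sumr -big_split /= !big_seq.
apply: ler_sum => s sV.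
rewrite mulr1 [4 * _]mulrC -mulrDr ler_wpM2l ?path_weight_ge0 //.
exact: step_mean_urnF (live_paths_head (ltn0Sn _) sV).
Qed.

Lemma path_mean_urnF_ge k (K : R) : 0 < K ->
  ln K * path_mean k (@urnHr R) - K * survival k <= path_mean k (@urnF R).
Proof.
move=> K0; rewrite /survival /path_mean !mulr_sumr -sumrB.
apply: ler_sum => s _; rewrite mulr1 /urnF.
have := ler_wpM2l (path_weight_ge0 s) (xlnx_ge_linear (urnHr_ge0 R (head origin s)) K0).
lra.
Qed.

Lemma survival_entropy_bound n (K : R) : (0 < n)%N -> 0 < K ->
  2 * ln K <= urnF R (1, 1) + 4 * \sum_(k < n) survival k + K * survival n.
Proof.
move=> n0 K0; have := path_mean_urnF_ge n K0; rewrite path_mean_urnH //.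
have := path_mean_urnF_le n0; lra.
Qed.

Lemma survival_sum_unbounded (B : R) : ~ (forall N, \sum_(k < N) survival k <= B).
Proof.
move=> sumB.
pose c := urnF R (1, 1) + 4 * B; pose K := expR (`|c| + 1).
pose n := (Num.truncn (K * B)).+1.
have K0 : 0 < K by apply: expR_gt0.
have tail : n.+1%:R * survival n <= B.
  apply: le_trans (sumB n.+1).
  have -> : n.+1%:R * survival n = \sum_(k < n.+1) survival n.
    by rewrite sumr_const card_ord mulr_natl.
  by apply: ler_sum => i _; apply: survival_noninc; rewrite -ltnS.
have small : K * survival n < 1.
  have KBn : K * B < n%:R by apply: truncnS_gt.
  have := ler_wpM2l (ltW K0) tail; rewrite -natr1 => h.
  have := ler0n R n; nra.
have := @survival_entropy_bound n K (ltn0Sn _) K0.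
have -> : ln K = `|c| + 1 by rewrite expRK.
have : c = urnF R (1, 1) + 4 * B by [].
have := normr_ge0 c; have := ler_norm c; have := sumB n; lra.
Qed.

End path_means.

Local Open Scope classical_set_scope.
Import HBNNSimple.

Lemma sum_indic_le (T : Type) (R : realDomainType) (A : nat -> set T) N (w : T) (r : R) :
  0 <= r -> (forall i, (i < N)%N -> A i w -> i.+1%:R < r) ->
  \sum_(i < N) \1_(A i) w <= r.
Proof.
move=> r0 hA.
suff : \sum_(i < N) \1_(A i) w <= N%:R :> R /\ \sum_(i < N) \1_(A i) w <= r.
  by move=> [_].
elim: N hA => [|N IH] hA; first by rewrite big_ord0 ler0n.
have [IHN IHr] := IH (fun i iN => hA i (ltnW iN)).
rewrite big_ord_recr /= indicE -natr1.
case: (boolP (w \in A N)) => [/set_mem AN|_]; rewrite ?mulr1n ?mulr0n.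
  by have := hA N (ltnSn N) AN; rewrite -natr1; split; lra.
by split; lra.
Qed.

Section integral_lower_bound.
Context d (T : measurableType d) (R : realType) (mu : {measure set T -> \bar R}).
Local Open Scope ereal_scope.

Lemma sintegral_le_integral (f : T -> \bar R) (h : {nnsfun T >-> R}) :
  (forall x, 0 <= f x) -> (forall x, (h x)%:E <= f x) ->
  sintegral mu h <= \int[mu]_x f x.
Proof. by move=> f0 hf; rewrite ge0_integralTE //; apply: ereal_sup_ubound; exists h. Qed.

Lemma sintegral_sum_indic (A : nat -> set T) (mA : forall k, measurable (A k)) N :
  sintegral mu (sum_nnsfun (fun k => indic_nnsfun R (mA k)) N) = \sum_(k < N) mu (A k).
Proof.
set h := sum_nnsfun _ N.
have -> : sintegral mu h = sintegral mu (h \_ setT).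
  by apply: eq_sintegral => x; rewrite patch_setT.
rewrite -integral_nnsfun //.
rewrite (eq_integral (fun x => \sum_(k < N) (\1_(A k) x)%:E)); last first.
  by move=> x _; rewrite sum_nnsfunE sumEFin.
rewrite ge0_integral_sum //.
- by apply: eq_bigr => k _; rewrite integral_indic // setIT.
- move=> k; apply/measurable_realfun.measurable_EFinP.
  exact: measurable_realfun.measurable_indic.
Qed.

End integral_lower_bound.

(* [path_fun n s] reads a path [s] of length [n], stored newest state first,
   as the trajectory [i |-> X_i] for [1 <= i <= n]. *)
Definition path_fun n (s : seq state) (i : nat) : state := nth origin s (n - i).

Lemma cyl_eq (T : Type) (X : nat -> T -> state) n (f g : nat -> state) :
  (forall i, (1 <= i <= n)%N -> f i = g i) -> cyl X n f = cyl X n g.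
Proof.
move=> fg; apply/seteqP; split => w /= h i hi; first by rewrite -fg //; apply: h.
by rewrite fg //; apply: h.
Qed.

Lemma path_fun_inj n (s s' : seq state) : size s = n -> size s' = n ->
  (forall i, (1 <= i <= n)%N -> path_fun n s i = path_fun n s' i) -> s = s'.
Proof.
move=> sz sz' e; apply: (eq_from_nth (x0 := origin)); first by rewrite sz sz'.
move=> j; rewrite sz => jn; have := e (n - j)%N; rewrite /path_fun subKn ?(ltnW jn) //.
by apply; lia.
Qed.

Definition survival_event (T : Type) (X : nat -> T -> state) k : set T :=
  \bigcup_(s in [set` live_paths k]) cyl X k.+1 (path_fun k.+1 s).

Lemma trivIset_live_cyl (T : Type) (X : nat -> T -> state) k :
  trivIset [set` live_paths k] (fun s => cyl X k.+1 (path_fun k.+1 s)).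
Proof.
move=> s s' /live_paths_shape [sz _] /live_paths_shape [sz' _] [w [hs hs']].
by apply: path_fun_inj sz sz' _ => i hi; rewrite -hs // -hs'.
Qed.

Section leaky_urn_events.
Context d (T : measurableType d) (R : realType) (P : probability T R).
Variable X : nat -> T -> state.
Hypothesis hX : is_leaky_urn P X.

Lemma measurable_cyl n f : measurable (cyl X n f).
Proof.
have [mX _ _] := hX; elim: n => [|n IH].
  by rewrite [cyl _ _ _](_ : _ = setT) //; apply/seteqP; split => // w _ i; lia.
have -> : cyl X n.+1 f = cyl X n f `&` X n.+1 @^-1` [set f n.+1].
  apply/seteqP; split => w /=.
    by move=> h; split => [i hi|]; apply: h; lia.
  move=> [h1 h2] i hi; have [->|ne] := eqVneq i n.+1; first exact: h2.
  by apply: h1; lia.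
exact: measurableI.
Qed.

Lemma measurable_survival_event k : measurable (survival_event X k).
Proof.
by apply: fin_bigcup_measurable => [|s _]; [exact: finite_seq | exact: measurable_cyl].
Qed.

Local Open Scope ereal_scope.

Lemma prob_cyl_live_path k s : s \in live_paths k ->
  P (cyl X k.+1 (path_fun k.+1 s)) = (path_weight R s)%:E.
Proof.
have [_ P1 PS] := hX; elim: k s => [|k IH] s.
  by rewrite /= mem_seq1 => /eqP ->; rewrite P1.
move=> /allpairsPdep [s' [y [s'V _ ->]]].
have [sz _] := live_paths_shape s'V.
rewrite PS // (@cyl_eq _ X k.+1 _ (path_fun k.+1 s')); last first.
  by move=> i hi; rewrite /path_fun (_ : (k.+2 - i = (k.+1 - i).+1)%N) //; lia.
rewrite IH // /path_fun subSnn subnn /=.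
by case: s' sz s'V => [|x s'] //= _ _; rewrite EFinM muleC.
Qed.

Lemma prob_survival_event k : P (survival_event X k) = (survival R k)%:E.
Proof.
rewrite measure_fin_bigcup; last 3 first.
- exact: finite_seq.
- exact: trivIset_live_cyl.
- by move=> s _; exact: measurable_cyl.
rewrite -fsbig_seq ?live_paths_uniq // /survival /path_mean -sumEFin big_seq [RHS]big_seq.
by apply: eq_bigr => s sV; rewrite mulr1; exact: prob_cyl_live_path.
Qed.

End leaky_urn_events.

Local Open Scope ereal_scope.

Lemma tau_ge0 (R : realType) (T : Type) (X : nat -> T -> state) w : 0 <= tau R X w.
Proof. by apply: le_ereal_inf_tmp => _ [t _ <-]; rewrite lee_fin ler0n. Qed.

Lemma tau_gt_survival (R : realType) (T : Type) (X : nat -> T -> state) k w :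
  survival_event X k w -> (k.+1%:R)%:E < tau R X w.
Proof.
move=> [s /= sV hw]; have [sz al] := live_paths_shape sV.
apply: (@lt_le_trans _ _ (k.+2%:R)%:E); first by rewrite lte_fin ltr_nat.
apply: le_ereal_inf_tmp => _ [t [t1 ht] <-]; rewrite lee_fin ler_nat leqNgt.
apply/negP => tk; have := al (k.+1 - t)%N; rewrite /alive.
by rewrite -/(path_fun k.+1 s t) -hw ?ht ?eqxx //; lia.
Qed.

Lemma sum_survival_indic_le_tau (R : realType) (T : Type) (X : nat -> T -> state) N w :
  (\sum_(k < N) \1_(survival_event X k) w)%:E <= tau R X w.
Proof.
move: (tau_ge0 R X w) (@tau_gt_survival R T X ^~ w).
case: (tau R X w) => [r| |] // t0 gt; last by rewrite leey.
rewrite lee_fin; apply: sum_indic_le => [|k _ /gt]; first by rewrite -lee_fin.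
by rewrite lte_fin.
Qed.

Lemma integral_tau_ge_survival d (T : measurableType d) (R : realType)
  (P : probability T R) (X : nat -> T -> state) : is_leaky_urn P X ->
  forall N, (\sum_(k < N) survival R k)%:E <= \int[P]_w tau R X w.
Proof.
move=> hX N.
pose h := sum_nnsfun (fun k => indic_nnsfun R (measurable_survival_event hX k)) N.
have <- : sintegral P h = (\sum_(k < N) survival R k)%:E.
  rewrite sintegral_sum_indic -sumEFin.
  by apply: eq_bigr => k _; exact: prob_survival_event.
apply: sintegral_le_integral => w; first exact: tau_ge0.
by rewrite sum_nnsfunE; exact: sum_survival_indic_le_tau.
Qed.

Theorem corollary3p8 (d : measure_display) (T : measurableType d)
  (R : realType) (P : probability T R) (X : nat -> T -> state) :
  is_leaky_urn P X ->
  \int[P]_w (tau R X w) = +oo.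
Proof.
move=> /integral_tau_ge_survival; case: (\int[P]_w tau R X w) => [r| |] // sum_le.
  by exfalso; apply: (@survival_sum_unbounded R r) => N; rewrite -lee_fin sum_le.
by have := sum_le 0%N; rewrite big_ord0.
Qed.
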